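(* Let $G$ be a connected graph on $n\ge 2$ vertices with Wiener index $W(G)$. Then $\gamma(G)\le \dfrac{n^2}{2W(G)}$, with equality if and only if $G$ is transmission-regular.
   Context: For a finite simple undirected graph $G$ with $n$ vertices, let $\mathcal{F}=\{x\in\mathbb{R}^{V(G)} : \sum_{v} x_v = 0,\ \|x\|_\infty = 1\}$, for $x\in\mathcal{F}$ let $\gamma_x(G)=\max_{uv\in E(G)}|x_u-x_v|$, and $\gamma(G)=\min_{x\in\mathcal{F}}\gamma_x(G)$. For a connected graph, $d(u,v)$ is shortest-path distance, $\operatorname{tr}(u)=\sum_v d(u,v)$, and $W(G)=\sum_{\{u,v\}}d(u,v)=\frac12\sum_u\operatorname{tr}(u)$ (sum over unordered pairs). $G$ is transmission-regular if all vertices have the same transmission. *)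

From HB Require Import structures.
From mathcomp Require Import all_boot all_order all_algebra.
From mathcomp Require Import classical_sets reals.
Set Implicit Arguments. Unset Strict Implicit. Unset Printing Implicit Defensive.
Import Order.TTheory GRing.Theory Num.Theory.
Local Open Scope ring_scope.
Local Open Scope classical_set_scope.

Definition simple_graph (T : finType) (e : rel T) : Prop :=
  symmetric e /\ irreflexive e.

Definition connected_graph (T : finType) (e : rel T) : Prop :=
  forall u v : T, connect e u v.

Definition walk_k (T : finType) (e : rel T) (k : nat) (u v : T) : bool :=
  [exists p : k.-tuple T, path e u p && (last u p == v)].

(* shortest-path distance: least k with a walk of length k from u to v.
   Searched in [0, #|T|); in a connected graph the distance is <= #|T|-1,
   so this is exactly the graph distance. *)
Definition dist (T : finType) (e : rel T) (u v : T) : nat :=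
  find (fun k => walk_k e k u v) (iota 0 #|T|).

Definition transmission (T : finType) (e : rel T) (u : T) : nat :=
  (\sum_(v : T) dist e u v)%N.

(* Wiener index W(G) = (1/2) sum_u tr(u) = sum over unordered pairs *)
Definition wiener (R : realType) (T : finType) (e : rel T) : R :=
  (\sum_(u : T) (transmission e u)%:R) / 2.

Definition transmission_regular (T : finType) (e : rel T) : Prop :=
  forall u v : T, transmission e u = transmission e v.

Definition sup_norm (R : realType) (T : finType) (x : T -> R) : R :=
  \big[Num.max/0]_(v : T) `|x v|.

Definition feasible (R : realType) (T : finType) (x : T -> R) : Prop :=
  \sum_(v : T) x v = 0 /\ sup_norm x = 1.

Definition gamma_x (R : realType) (T : finType) (e : rel T) (x : T -> R) : R :=
  \big[Num.max/0]_(p : T * T | e p.1 p.2) `|x p.1 - x p.2|.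

(* gamma(G) = min_{x in F} gamma_x(G), taken as the infimum (the minimum
   is attained by compactness). *)
Definition gamma (R : realType) (T : finType) (e : rel T) : R :=
  inf [set g : R | exists x : T -> R, feasible x /\ g = gamma_x e x].

From mathcomp Require Import all_boot all_order all_algebra.
From mathcomp Require Import classical_sets reals lra.
Set Implicit Arguments. Unset Strict Implicit. Unset Printing Implicit Defensive.
Import Order.TTheory GRing.Theory Num.Theory.
Local Open Scope ring_scope.

(* The proof computes gamma(G) = n / t, where t is the largest transmission.
   If x is feasible and |x_v| = 1, then
     n = sum_w x_v (x_v - x_w) <= gamma_x(G) * sum_w d(v,w) = gamma_x(G) tr(v),
   since x changes by at most gamma_x(G) along each edge of a shortest path;
   so gamma_x(G) >= n / t.  Conversely, for a vertex u of transmission t the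
   centred distance function w |-> d(u,w) - t/n changes by at most 1 along
   edges and has sup-norm at least t/n, so after normalisation it is feasible
   with gamma_x(G) <= n / t.  Finally n / t <= n^2 / (2 W(G)) amounts to
   sum_u tr(u) <= n t, with equality iff every transmission equals t. *)

Section Distance.
Variables (T : finType) (e : rel T).

Lemma walk_kP k u v :
  reflect (exists p : seq T, [/\ size p = k, path e u p & last u p = v])
          (walk_k e k u v).
Proof.
apply: (iffP existsP) => [[p /andP[pp /eqP lp]]|[p [sp pp lp]]].
  by exists (tval p); rewrite size_tuple.
have sp' : size p == k by apply/eqP.
by exists (Tuple sp'); rewrite /= pp lp eqxx.
Qed.

Hypothesis conn : connected_graph e.

Lemma walk_lt_card u v : exists2 k, (k < #|T|)%N & walk_k e k u v.
Proof.
have /connectP [p pp lp] := conn u v.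
move: lp; case: (shortenP pp) => p' pp' up' _ lp.
exists (size p'); last by apply/walk_kP; exists p'; rewrite -lp.
have /card_uniqP cs := up'.
by have := max_card (mem (u :: p')); rewrite cs.
Qed.

Lemma dist_walk_lt_card u v : walk_k e (dist e u v) u v /\ (dist e u v < #|T|)%N.
Proof.
have [k kN wk] := walk_lt_card u v.
have hs : has (fun k => walk_k e k u v) (iota 0 #|T|).
  by apply/hasP; exists k => //; rewrite mem_iota.
have := hs; rewrite has_find size_iota => lt_find.
by have := nth_find 0%N hs; rewrite /dist nth_iota // add0n.
Qed.

Lemma dist_min u v k : walk_k e k u v -> (dist e u v <= k)%N.
Proof.
move=> wk; have [_ dN] := dist_walk_lt_card u v.
have [kN|] := ltnP k #|T|; last exact: leq_trans (ltnW dN).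
rewrite leqNgt; apply/negP => /(before_find 0%N).
by rewrite nth_iota // add0n wk.
Qed.

Lemma dist_refl u : dist e u u = 0%N.
Proof. by apply/eqP; rewrite -leqn0; apply: dist_min; apply/walk_kP; exists [::]. Qed.

Lemma dist_gt0 u v : u != v -> (0 < dist e u v)%N.
Proof.
move=> uv; have [w _] := dist_walk_lt_card u v; rewrite lt0n; apply/negP => /eqP d0.
move: w; rewrite d0 => /walk_kP [p [/size0nil -> _ /= vu]].
by rewrite vu eqxx in uv.
Qed.

Lemma dist_edge u a b : e a b -> (dist e u b <= (dist e u a).+1)%N.
Proof.
move=> eab; apply: dist_min.
have [/walk_kP [p [sp pp lp]] _] := dist_walk_lt_card u a.
apply/walk_kP; exists (rcons p b).
by rewrite size_rcons sp rcons_path pp lp eab last_rcons.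
Qed.

Lemma transmission_gt0 u : (2 <= #|T|)%N -> (0 < transmission e u)%N.
Proof.
move=> n2; have [w uw] : exists w, u != w.
  have [a [b [_ _ ab]]] := card_gt1P n2.
  by case: (eqVneq u a) => [->|]; [exists b | exists a].
apply: leq_trans (dist_gt0 uw) _.
by rewrite /transmission (bigD1 w) //= leq_addr.
Qed.

End Distance.

Section Gamma.
Variables (R : realType) (T : finType) (e : rel T).

Lemma gamma_x_ge0 (x : T -> R) : 0 <= gamma_x e x.
Proof. exact: bigmax_ge_id. Qed.

Lemma gamma_x_edge (x : T -> R) a b : e a b -> `|x a - x b| <= gamma_x e x.
Proof. by move=> eab; apply: (@le_bigmax_cond _ _ _ _ (a, b)). Qed.

Lemma le_sup_norm (x : T -> R) w : `|x w| <= sup_norm x.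
Proof. exact: (@le_bigmax_cond _ _ _ _ w). Qed.

Lemma sup_norm_attained (x : T -> R) (v0 : T) : exists w, `|x w| = sup_norm x.
Proof.
have [w _ hw] := eq_bigmax v0 predT (fun v => `|x v|) isT (fun i _ => normr_ge0 (x i)).
by exists w; rewrite /sup_norm hw.
Qed.

Lemma gamma_x_path (x : T -> R) v p :
  path e v p -> `|x v - x (last v p)| <= gamma_x e x * (size p)%:R.
Proof.
elim: p v => [|y p IH] v /=; first by rewrite subrr normr0 mulr0.
case/andP=> /(gamma_x_edge x) evy /IH pp.
rewrite -addn1 natrD mulrDr mulr1.
have := ler_normD (x v - x y) (x y - x (last y p)).
rewrite addrA subrK; lra.
Qed.

Lemma gamma_x_scale (x : T -> R) c :
  0 <= c -> gamma_x e (fun w => c * x w) <= c * gamma_x e x.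
Proof.
move=> c0; apply: bigmax_le => [|[a b] /= eab]; first exact: mulr_ge0 (gamma_x_ge0 x).
by rewrite -mulrBr normrM ger0_norm // ler_wpM2l // gamma_x_edge.
Qed.

Lemma feasible_normalize (y : T -> R) :
  \sum_v y v = 0 -> 0 < sup_norm y -> feasible (fun w => (sup_norm y)^-1 * y w).
Proof.
move=> sy M0; have Mi0 : 0 < (sup_norm y)^-1 by rewrite invr_gt0.
split; first by rewrite -mulr_sumr sy mulr0.
case: (pickP (fun _ : T => true)) => [v0 _|T0]; last by move: M0; rewrite /sup_norm big_pred0 ?ltxx.
have [w0 hw0] := sup_norm_attained y v0.
apply/le_anti/andP; split.
  apply: bigmax_le => // w _.
  by rewrite normrM gtr0_norm // ler_pdivrMl // mulr1 le_sup_norm.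
apply: (bigmax_sup w0) => //.
by rewrite normrM gtr0_norm // hw0 mulVf // gt_eqF.
Qed.

Hypothesis conn : connected_graph e.

Lemma gamma_x_dist (x : T -> R) a b : `|x a - x b| <= gamma_x e x * (dist e a b)%:R.
Proof.
have [/walk_kP [p [<- pp <-]] _] := dist_walk_lt_card conn a b.
exact: gamma_x_path.
Qed.

Lemma card_le_gamma_x_transmission (x : T -> R) (v0 : T) :
  feasible x -> exists v, #|T|%:R <= gamma_x e x * (transmission e v)%:R.
Proof.
move=> [sx nx]; have [v xv1] := sup_norm_attained x v0; rewrite nx in xv1.
exists v.
have -> : #|T|%:R = \sum_w x v * (x v - x w).
  under eq_bigr do rewrite mulrBr.
  rewrite sumrB sumr_const -mulr_sumr sx mulr0 subr0.
  by rewrite -expr2 -real_normK ?num_real // xv1 expr1n.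
rewrite /transmission natr_sum mulr_sumr; apply: ler_sum => w _.
apply: le_trans (ler_norm _) (le_trans _ (gamma_x_dist x v w)).
by rewrite normrM xv1 mul1r.
Qed.

Hypothesis sym : symmetric e.

Lemma exists_feasible_gamma_x_le u : (0 < transmission e u)%N ->
  exists z : T -> R, feasible z /\ gamma_x e z <= #|T|%:R / (transmission e u)%:R.
Proof.
move=> tpos; set t : R := (transmission e u)%:R.
have n0 : 0 < #|T|%:R :> R by rewrite ltr0n; apply/card_gt0P; exists u.
have t0 : 0 < t by rewrite ltr0n.
pose y w := (dist e u w)%:R - t / #|T|%:R.
have yM : t / #|T|%:R <= sup_norm y.
  have := le_sup_norm y u; rewrite /y (dist_refl conn) sub0r normrN.
  by rewrite ger0_norm // divr_ge0 // ltW.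
have M0 : 0 < sup_norm y by apply: lt_le_trans yM; exact: divr_gt0.
have sy : \sum_v y v = 0.
  rewrite sumrB sumr_const -[_ *+ _]mulr_natr divfK ?gt_eqF // -natr_sum.
  exact: subrr.
have gy : gamma_x e y <= 1.
  apply: bigmax_le => // [[a b] /= eab].
  rewrite /y opprB addrA subrK.
  have r1 : (dist e u b)%:R <= (dist e u a)%:R + 1 :> R.
    by rewrite natr1 ler_nat dist_edge.
  have r2 : (dist e u a)%:R <= (dist e u b)%:R + 1 :> R.
    by rewrite natr1 ler_nat dist_edge // sym.
  rewrite ler_norml; apply/andP; split; lra.
exists (fun w => (sup_norm y)^-1 * y w); split; first exact: feasible_normalize.
have Mi0 : 0 <= (sup_norm y)^-1 by rewrite invr_ge0 ltW.
apply: le_trans (gamma_x_scale y Mi0) (le_trans (ler_wpM2l Mi0 gy) _).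
by rewrite mulr1 -invf_div lef_pV2 ?posrE ?divr_gt0.
Qed.
End Gamma.

Lemma gamma_eq_card_div_max_transmission (R : realType) (T : finType) (e : rel T) :
  symmetric e -> connected_graph e -> (2 <= #|T|)%N ->
  gamma R e = #|T|%:R / (\max_(u : T) transmission e u)%N%:R.
Proof.
move=> sym conn n2.
have [u0 tu0] := bigop.eq_bigmax (transmission e) (ltnW n2); rewrite tu0.
have t0 := transmission_gt0 conn u0 n2.
have [z [fz gz]] := exists_feasible_gamma_x_le R conn sym t0.
have gamma_x_ge (x : T -> R) : feasible x -> #|T|%:R / (transmission e u0)%:R <= gamma_x e x.
  move=> fx; have [v hv] := card_le_gamma_x_transmission conn u0 fx.
  rewrite ler_pdivrMr ?ltr0n //; apply: le_trans hv _.
  by rewrite ler_wpM2l ?gamma_x_ge0 // ler_nat -tu0 leq_bigmax.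
apply/le_anti/andP; split.
  apply: le_trans gz; apply: ge_inf; last by exists z.
  by exists 0 => g [x [_ ->]]; exact: gamma_x_ge0.
apply: lb_le_inf; first by exists (gamma_x e z), z.
by move=> g [x [fx ->]]; exact: gamma_x_ge.
Qed.

Lemma sum_le_card_mul_bigmax (I : finType) (F : I -> nat) :
  (\sum_i F i <= #|I| * \max_i F i)%N.
Proof. by rewrite -sum_nat_const; apply: leq_sum => i _; exact: leq_bigmax. Qed.

Lemma sum_eq_card_mul_bigmax (I : finType) (F : I -> nat) :
  (\sum_i F i = #|I| * \max_i F i)%N <-> (forall i, F i = \max_i F i).
Proof.
split=> [hS i|hF]; last by rewrite -sum_nat_const; apply: eq_bigr.
apply/eqP; rewrite eqn_leq leq_bigmax /= leqNgt; apply/negP => lt_i.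
have : (\sum_i F i < #|I| * \max_i F i)%N.
  rewrite -sum_nat_const (bigD1 i) // [X in (_ < X)%N](bigD1 i) //=.
  by rewrite -addSn leq_add // leq_sum // => j _; exact: leq_bigmax.
by rewrite hS ltnn.
Qed.

Lemma transmission_regularE (T : finType) (e : rel T) :
  transmission_regular e <-> forall u, transmission e u = (\max_v transmission e v)%N.
Proof.
split=> [reg u|hmax u v]; last by rewrite !hmax.
have n0 : (0 < #|T|)%N by apply/card_gt0P; exists u.
by have [u0 ->] := bigop.eq_bigmax (transmission e) n0.
Qed.

Lemma ler_div_sqr_div (R : numFieldType) (n t S : R) : 0 < n -> 0 < t -> 0 < S ->
  (n / t <= n ^+ 2 / S) = (S <= n * t).
Proof.
move=> n0 t0 S0.
by rewrite ler_pdivlMr // mulrAC ler_pdivrMr // expr2 -mulrA ler_pM2l.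
Qed.

Lemma eq_div_sqr_div (R : numFieldType) (n t S : R) : 0 < n -> 0 < t -> 0 < S ->
  (n / t == n ^+ 2 / S) = (S == n * t).
Proof.
move=> n0 t0 S0.
by rewrite eqr_div ?(gt_eqF t0) ?(gt_eqF S0) // expr2 -mulrA [S == _]eq_sym (inj_eq (mulfI (lt0r_neq0 n0))).
Qed.

Theorem theorem4p2 (R : realType) (T : finType) (e : rel T) :
  simple_graph e -> connected_graph e -> (2 <= #|T|)%N ->
  gamma R e <= (#|T|%:R ^+ 2) / (2 * wiener R e) /\
  (gamma R e = (#|T|%:R ^+ 2) / (2 * wiener R e) <-> transmission_regular e).
Proof.
move=> [sym _] conn n2.
set tm := (\max_(u : T) transmission e u)%N.
set S := (\sum_(u : T) transmission e u)%N.
have [u0 tu0] := bigop.eq_bigmax (transmission e) (ltnW n2).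
have t0 := transmission_gt0 conn u0 n2.
have n0 : 0 < #|T|%:R :> R by rewrite ltr0n ltnW.
have tm0 : 0 < tm%:R :> R by rewrite ltr0n /tm tu0.
have S0 : 0 < S%:R :> R.
  by rewrite ltr0n; apply: leq_trans t0 _; rewrite /S (bigD1 u0) //= leq_addr.
have -> : 2 * wiener R e = S%:R by rewrite /wiener mulrC divfK ?pnatr_eq0 // natr_sum.
rewrite (gamma_eq_card_div_max_transmission R sym conn n2).
rewrite ler_div_sqr_div // -natrM ler_nat sum_le_card_mul_bigmax; split=> //.
rewrite transmission_regularE -sum_eq_card_mul_bigmax (rwP eqP) eq_div_sqr_div //.
by rewrite -natrM eqr_nat; split => /eqP.
Qed.
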